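(* Let $\mathcal H_1,\mathcal H_2$ be real Hilbert spaces and let $\mathcal M_{ij}:\mathcal H_j\to\mathcal H_i$ ($i,j=1,2$) be bounded linear operators with $\mathcal M_{ji}=\mathcal M_{ij}^*$. Consider the self-adjoint bounded operator $\mathcal M=\begin{pmatrix}\mathcal M_{11}&\mathcal M_{12}\\ \mathcal M_{21}&\mathcal M_{22}\end{pmatrix}$ on $\mathcal H_1\times\mathcal H_2$ (with inner product $\langle (x_1,y_1),(x_2,y_2)\rangle=\langle x_1,x_2\rangle+\langle y_1,y_2\rangle$). Suppose $\mathcal M_{11}\ge 0$ and $-\mathcal M_{22}\ge0$, i.e. $\langle \mathcal M_{11}x,x\rangle\ge0$ for all $x\in\mathcal H_1$ and $\langle\mathcal M_{22}y,y\rangle\le 0$ for all $y\in\mathcal H_2$. Then for every $\varepsilon>0$ the operator $$\mathcal M_\varepsilon=\begin{pmatrix}\mathcal M_{11}+\varepsilon I&\mathcal M_{12}\\ \mathcal M_{21}&\mathcal M_{22}-\varepsilon I\end{pmatrix}$$ is invertible (with bounded inverse), and $$\|\mathcal M_\varepsilon^{-1}\mathcal M\|\le 1\qquad\text{for all }\varepsilon>0.$$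
   Context: $\mathcal M_{ij}^*$ denotes the Hilbert-space adjoint; $I$ denotes the identity operator on the relevant space; $\|\cdot\|$ is the operator norm. *)

(* Real Hilbert spaces are not in the library:
   we model a real Hilbert space as a complete normed R-module whose norm
   comes from an inner product. *)
From HB Require Import structures.
From mathcomp Require Import all_boot all_order all_algebra.
From mathcomp Require Import all_classical all_reals all_analysis.
Set Implicit Arguments. Unset Strict Implicit. Unset Printing Implicit Defensive.
Import Order.TTheory GRing.Theory Num.Theory.
Import numFieldNormedType.Exports.
Local Open Scope ring_scope.

Definition is_inner_product (R : realType) (H : normedModType R)
    (ip : H -> H -> R) : Prop :=
  [/\ (forall x y, ip x y = ip y x),
      (forall a x y z, ip (a *: x + y) z = a * ip x z + ip y z)
    & (forall x, ip x x = `|x| ^+ 2)].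

Definition bounded_linear (R : realType) (U V : normedModType R)
    (T : U -> V) : Prop :=
  (forall a x y, T (a *: x + y) = a *: T x + T y) /\
  (exists C : R, forall x, `|T x| <= C * `|x|).

Definition pnorm (R : realType) (H1 H2 : normedModType R) (p : H1 * H2) : R :=
  Num.sqrt (`|p.1| ^+ 2 + `|p.2| ^+ 2).

Definition bounded_linear_prod (R : realType) (H1 H2 : normedModType R)
    (N : H1 * H2 -> H1 * H2) : Prop :=
  (forall (a : R) (p q : H1 * H2),
      N (a *: p.1 + q.1, a *: p.2 + q.2) =
      (a *: (N p).1 + (N q).1, a *: (N p).2 + (N q).2)) /\
  (exists C : R, forall p, pnorm (N p) <= C * pnorm p).

Definition blockop (R : realType) (H1 H2 : normedModType R)
    (A : H1 -> H1) (B : H2 -> H1) (C : H1 -> H2) (D : H2 -> H2)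
    (p : H1 * H2) : H1 * H2 :=
  (A p.1 + B p.2, C p.1 + D p.2).

(* Write M = [[M11, M12], [M21, M22]] on H1 x H2 with M21 = M12^*, M11 >= 0,
   M22 <= 0, and M_eps = M + eps J where J (x, y) = (x, -y).  The proof rests
   on the indefinite form [p, q] = <p1, q1> - <p2, q2>, for which the cross
   terms of M cancel, so that [M p, p] >= 0 and [M_eps p, p] >= eps |p|^2.
   - The latter gives eps |p| <= |M_eps p|, hence injectivity of M_eps and the
     bound eps^-1 on its inverse.
   - Surjectivity is obtained by block elimination: M11 + eps and minus the
     Schur complement (eps - M22) + M21 (M11 + eps)^-1 M12 are coercive, hence
     invertible by the Lax-Milgram argument (Banach fixed point theorem
     applied to x |-> x - t (A x - b)), proved first for a single space.
   - If M_eps q = M p then M (p - q) = eps J q, and [M (p - q), p - q] >= 0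
     reads |q|^2 <= <q, p>, whence |M_eps^-1 M p| = |q| <= |p|. *)

From HB Require Import structures.
From mathcomp Require Import all_boot all_order all_algebra.
From mathcomp Require Import all_classical all_reals all_analysis.
From mathcomp Require Import ring lra.
Import Order.TTheory GRing.Theory Num.Theory.
Import numFieldNormedType.Exports.
Local Open Scope ring_scope.
Set Implicit Arguments. Unset Strict Implicit.

Section LinearMaps.
Variables (R : pzRingType) (U V : lmodType R) (T : U -> V).
Hypothesis linT : forall a x y, T (a *: x + y) = a *: T x + T y.

Lemma lin0 : T 0 = 0.
Proof.
have := linT 1 0 0; rewrite !scale1r addr0 => /(congr1 (fun v => v - T 0)).
by rewrite /= subrr addrK.
Qed.

Lemma linB x y : T (x - y) = T x - T y.
Proof.
have linZ a z : T (a *: z) = a *: T z by rewrite -[a *: z]addr0 linT lin0 addr0.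
have linN z : T (- z) = - T z by rewrite -scaleN1r linZ scaleN1r.
by have := linT 1 x (- y); rewrite !scale1r linN.
Qed.
End LinearMaps.

Section InnerProduct.
Variables (R : realType) (E : normedModType R) (ip : E -> E -> R).
Hypothesis hip : is_inner_product ip.

Lemma ipC x y : ip x y = ip y x. Proof. by case: hip. Qed.
Lemma ipxx x : ip x x = `|x| ^+ 2. Proof. by case: hip. Qed.

Lemma ipDl x y z : ip (x + y) z = ip x z + ip y z.
Proof. by case: hip => _ ipL _; have := ipL 1 x y z; rewrite scale1r mul1r. Qed.

Lemma ipZl a x z : ip (a *: x) z = a * ip x z.
Proof.
case: hip => _ ipL _; have ip0 : ip 0 z = 0.
  have := ipL 1 0 0 z; rewrite scale1r addr0 mul1r.
  by move=> /(congr1 (fun v => v - ip 0 z)); rewrite /= subrr addrK.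
by rewrite -[a *: x]addr0 ipL ip0 addr0.
Qed.

Lemma ipNl x z : ip (- x) z = - ip x z.
Proof. by rewrite -scaleN1r ipZl mulN1r. Qed.
Lemma ipBl x y z : ip (x - y) z = ip x z - ip y z.
Proof. by rewrite ipDl ipNl. Qed.
Lemma ipBr x y z : ip z (x - y) = ip z x - ip z y.
Proof. by rewrite ipC ipBl !(ipC _ z). Qed.
Lemma ipZr a x z : ip z (a *: x) = a * ip z x.
Proof. by rewrite ipC ipZl (ipC x). Qed.

Lemma ip_expand x y t :
  `|x - t *: y| ^+ 2 = `|x| ^+ 2 - 2 * t * ip y x + t ^+ 2 * `|y| ^+ 2.
Proof. by rewrite -!ipxx ipBl !ipBr !ipZl !ipZr (ipC x y); ring. Qed.

Lemma young z u c : 2 * c * ip z u <= `|z| ^+ 2 + c ^+ 2 * `|u| ^+ 2.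
Proof. by have := sqr_ge0 `|z - c *: u|; rewrite ip_expand (ipC u z); lra. Qed.
End InnerProduct.

(* The numerical core of the lower bounds below: from c a^2 <= S and the
   Young bound 2cS <= b^2 + c^2 a^2 we get c a <= b. *)
Lemma young_lower_bound (R : realFieldType) (a b S c : R) :
  0 <= a -> 0 <= b -> 0 < c ->
  c * a ^+ 2 <= S -> 2 * c * S <= b ^+ 2 + c ^+ 2 * a ^+ 2 -> c * a <= b.
Proof.
move=> a_ge0 b_ge0 c_gt0 coer cs.
have sq_le : (c * a) ^+ 2 <= b ^+ 2 by nra.
nra.
Qed.

Section HilbertProduct.
Variables (R : realType) (H1 H2 : normedModType R).

Lemma pnorm_sqr (p : H1 * H2) : pnorm p ^+ 2 = `|p.1| ^+ 2 + `|p.2| ^+ 2.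
Proof. by rewrite /pnorm sqr_sqrtr // addr_ge0 // sqr_ge0. Qed.

Lemma pnorm0 : pnorm (0 : H1, 0 : H2) = 0.
Proof. by rewrite /pnorm !normr0 expr0n addr0 sqrtr0. Qed.

Lemma pnorm_le0 (p : H1 * H2) : pnorm p <= 0 -> p = (0, 0).
Proof.
case: p => x y p_le0.
have sum0 : `|x| ^+ 2 + `|y| ^+ 2 = 0.
  have p0 : pnorm (x, y) = 0 by apply/eqP; rewrite eq_le p_le0 sqrtr_ge0.
  by rewrite -(pnorm_sqr (x, y)) p0 expr0n.
have := sqr_ge0 `|x|; have := sqr_ge0 `|y| => y_ge0 x_ge0.
have /eqP : `|x| ^+ 2 = 0 by lra.
have /eqP : `|y| ^+ 2 = 0 by lra.
by rewrite !sqrf_eq0 !normr_eq0 => /eqP -> /eqP ->.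
Qed.
End HilbertProduct.

Lemma pair_lower_bound (R : realType) (H1 H2 : normedModType R)
    (ip1 : H1 -> H1 -> R) (ip2 : H2 -> H2 -> R) (z u : H1 * H2) (c : R) :
  is_inner_product ip1 -> is_inner_product ip2 -> 0 < c ->
  c * pnorm u ^+ 2 <= ip1 z.1 u.1 + ip2 z.2 u.2 -> c * pnorm u <= pnorm z.
Proof.
move=> hip1 hip2 c_gt0 coer.
apply: young_lower_bound coer _; rewrite ?sqrtr_ge0 // !pnorm_sqr.
by have := young hip1 z.1 u.1 c; have := young hip2 z.2 u.2 c; lra.
Qed.

Section BoundedLinear.
Variable R : realType.

Lemma bounded_linear_bound (U V : normedModType R) (f : U -> V) :
  bounded_linear f -> exists2 C : R, 0 <= C & forall x, `|f x| <= C * `|x|.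
Proof.
case=> _ [C boundC]; exists `|C| => // x.
by apply: le_trans (boundC x) _; apply: ler_wpM2r => //; exact: ler_norm.
Qed.

Lemma bounded_linearD (U V : normedModType R) (f g : U -> V) :
  bounded_linear f -> bounded_linear g -> bounded_linear (fun x => f x + g x).
Proof.
move=> bf bg; have [Cf _ boundf] := bounded_linear_bound bf.
have [Cg _ boundg] := bounded_linear_bound bg.
split; first by move=> a x y; rewrite bf.1 bg.1 scalerDr addrACA.
exists (Cf + Cg) => x; rewrite mulrDl.
exact: le_trans (ler_normD _ _) (lerD (boundf x) (boundg x)).
Qed.

Lemma bounded_linearN (U V : normedModType R) (f : U -> V) :
  bounded_linear f -> bounded_linear (fun x => - f x).
Proof.
move=> [linf [C boundC]]; split; first by move=> a x y; rewrite linf opprD scalerN.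
by exists C => x; rewrite normrN.
Qed.

Lemma bounded_linear_scale (U : normedModType R) (e : R) :
  bounded_linear (fun x : U => e *: x).
Proof.
split; first by move=> a x y; rewrite scalerDr !scalerA mulrC.
by exists `|e| => x; rewrite normrZ.
Qed.

Lemma bounded_linear_comp (U V W : normedModType R) (f : V -> W) (g : U -> V) :
  bounded_linear f -> bounded_linear g -> bounded_linear (fun x => f (g x)).
Proof.
move=> bf bg; have [Cf Cf_ge0 boundf] := bounded_linear_bound bf.
have [Cg _ boundg] := bounded_linear_bound bg.
split; first by move=> a x y; rewrite bg.1 bf.1.
exists (Cf * Cg) => x; rewrite -mulrA.
exact: le_trans (boundf _) (ler_wpM2l Cf_ge0 (boundg x)).
Qed.
End BoundedLinear.

Lemma subrACA (V : zmodType) (a b c d : V) : (a - b) - (c - d) = (a - c) - (b - d).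
Proof. by rewrite !opprB addrACA [RHS]addrACA (addrC (- b)). Qed.

Section Coercive.
Variables (R : realType) (E : normedModType R) (ip : E -> E -> R).
Hypothesis hip : is_inner_product ip.
Variables (A : E -> E) (c : R).
Hypothesis linA : forall a x y, A (a *: x + y) = a *: A x + A y.
Hypotheses (c_gt0 : 0 < c) (coerA : forall x, c * `|x| ^+ 2 <= ip (A x) x).

Lemma coercive_lower_bound x : c * `|x| <= `|A x|.
Proof. exact: young_lower_bound (coerA x) (young hip (A x) x c). Qed.

Lemma coercive_injective : injective A.
Proof.
move=> x y Axy; apply/eqP; rewrite -subr_eq0 -normr_le0.
have := coercive_lower_bound (x - y); rewrite (linB linA) Axy subrr normr0.
by rewrite pmulr_rle0.
Qed.

Lemma coercive_step_contraction (C : R) : 0 <= C -> (forall x, `|A x| <= C * `|x|) ->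
  exists t k, [/\ 0 < t, 0 <= k < 1 & forall x, `|x - t *: A x| <= k * `|x|].
Proof.
move=> C_ge0 boundA; set L := C + c; set u := c / L; set t := u / L.
have L_gt0 : 0 < L by rewrite /L ltr_wpDl.
have u_gt0 : 0 < u by rewrite divr_gt0.
have u_le1 : u <= 1 by rewrite ler_pdivrMr // mul1r /L lerDr.
have t_gt0 : 0 < t by rewrite divr_gt0.
have tc : t * c = u ^+ 2 by rewrite /t /u; field; rewrite gt_eqF.
have tL : t * L = u by rewrite /t; field; rewrite gt_eqF.
clearbody t u; exists t, (1 - u ^+ 2 / 2); split => //; first by apply/andP; split; nra.
move=> x; have Ax_le : `|A x| <= L * `|x|.
  by apply: le_trans (boundA x) _; rewrite ler_wpM2r // lerDl ltW.
have step_sq : `|x - t *: A x| ^+ 2 <= (1 - u ^+ 2) * `|x| ^+ 2.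
  have coer_t : u ^+ 2 * `|x| ^+ 2 <= t * ip (A x) x.
    by rewrite -tc -mulrA ler_pM2l.
  have bound_t : t ^+ 2 * `|A x| ^+ 2 <= u ^+ 2 * `|x| ^+ 2.
    rewrite -tL exprMn -(mulrA (t ^+ 2)); apply: ler_wpM2l; first exact: sqr_ge0.
    by rewrite -exprMn; have := normr_ge0 (A x); nra.
  by rewrite (ip_expand hip); lra.
have k_ge0 : 0 <= 1 - u ^+ 2 / 2 by nra.
have step_sq' : `|x - t *: A x| ^+ 2 <= ((1 - u ^+ 2 / 2) * `|x|) ^+ 2.
  apply: le_trans step_sq _; rewrite exprMn; apply: ler_wpM2r; first exact: sqr_ge0.
  by rewrite sqrrB expr1n; have := sqr_ge0 (u ^+ 2 / 2); lra.
by have := normr_ge0 (x - t *: A x); have := mulr_ge0 k_ge0 (normr_ge0 x); nra.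
Qed.
End Coercive.

(* Lax-Milgram: a bounded coercive operator on a Hilbert space is onto;
   b = A x is the fixed point of the contraction x |-> x - t (A x - b). *)
Lemma coercive_surjective (R : realType) (E : completeNormedModType R)
    (ip : E -> E -> R) (A : E -> E) (c : R) :
  is_inner_product ip -> bounded_linear A -> 0 < c ->
  (forall x, c * `|x| ^+ 2 <= ip (A x) x) -> forall b, exists x, A x = b.
Proof.
move=> hip bA c_gt0 coerA b; have [C C_ge0 boundA] := bounded_linear_bound bA.
have [t [k [t_gt0 /andP[k_ge0 k_lt1] contr]]] :=
  coercive_step_contraction hip c_gt0 coerA C_ge0 boundA.
pose f x := (x - t *: A x) + t *: b.
have f_contr x y : `|f x - f y| <= k * `|x - y|.
  suff -> : f x - f y = (x - y) - t *: A (x - y) by exact: contr.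
  by rewrite /f opprD addrACA subrr addr0 subrACA -scalerBr (linB bA.1).
pose F := (totalfun_ setT f : {fun [set: E] >-> [set: E]}).
have F_contr : is_contraction F by exists (NngNum k_ge0); split => //= z _; exact: f_contr.
have [x _ /= x_fixed] := banach_fixed_point F_contr (@closedT _) (ex_intro _ 0 I).
have fx : f x = x by rewrite [RHS]x_fixed.
have residual : t *: (A x - b) = x - f x by rewrite opprD addrA subKr scalerBr.
exists x; apply/eqP; rewrite -subr_eq0.
have : t *: (A x - b) == 0 by rewrite residual fx subrr.
by rewrite scaler_eq0 (gt_eqF t_gt0).
Qed.

Lemma coercive_inverse (R : realType) (E : completeNormedModType R)
    (ip : E -> E -> R) (A : E -> E) (c : R) :
  is_inner_product ip -> bounded_linear A -> 0 < c ->
  (forall x, c * `|x| ^+ 2 <= ip (A x) x) ->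
  exists B : E -> E, bounded_linear B /\ cancel B A.
Proof.
move=> hip bA c_gt0 coerA.
pose B b := projT1 (cid (coercive_surjective hip bA c_gt0 coerA b)).
have BK : cancel B A by move=> b; rewrite /B; case: cid.
have injA := coercive_injective hip bA.1 c_gt0 coerA.
exists B; split => //; split; first by move=> a x y; apply: injA; rewrite bA.1 !BK.
exists c^-1 => x; rewrite -(ler_pM2l c_gt0) mulrA mulfV ?gt_eqF // mul1r.
by have := coercive_lower_bound hip c_gt0 coerA (B x); rewrite BK.
Qed.

Section BlockOperator.
Variables (R : realType) (H1 H2 : normedModType R).
Variables (A : H1 -> H1) (B : H2 -> H1) (C : H1 -> H2) (D : H2 -> H2).
Hypotheses (bA : bounded_linear A) (bB : bounded_linear B)
  (bC : bounded_linear C) (bD : bounded_linear D).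

Lemma blockop_linear a (p q : H1 * H2) :
  blockop A B C D (a *: p.1 + q.1, a *: p.2 + q.2) =
  (a *: (blockop A B C D p).1 + (blockop A B C D q).1,
   a *: (blockop A B C D p).2 + (blockop A B C D q).2).
Proof. by rewrite /blockop /= bA.1 bB.1 bC.1 bD.1 !scalerDr; congr (_, _); rewrite addrACA. Qed.

Lemma blockopB (p q : H1 * H2) :
  blockop A B C D (p.1 - q.1, p.2 - q.2) =
  ((blockop A B C D p).1 - (blockop A B C D q).1,
   (blockop A B C D p).2 - (blockop A B C D q).2).
Proof.
rewrite /blockop /= (linB bA.1) (linB bB.1) (linB bC.1) (linB bD.1).
by congr (_, _); rewrite opprD addrACA.
Qed.
End BlockOperator.

Section Regularisation.
Variables (R : realType) (H1 H2 : completeNormedModType R).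
Variables (ip1 : H1 -> H1 -> R) (ip2 : H2 -> H2 -> R).
Hypotheses (hip1 : is_inner_product ip1) (hip2 : is_inner_product ip2).
Variables (M11 : H1 -> H1) (M12 : H2 -> H1) (M21 : H1 -> H2) (M22 : H2 -> H2).
Hypotheses (hM11 : bounded_linear M11) (hM12 : bounded_linear M12)
  (hM21 : bounded_linear M21) (hM22 : bounded_linear M22).
Hypothesis adj12 : forall (y : H2) (x : H1), ip1 (M12 y) x = ip2 y (M21 x).
Hypotheses (pos11 : forall x, 0 <= ip1 (M11 x) x)
  (neg22 : forall y, ip2 (M22 y) y <= 0).
Variable eps : R.
Hypothesis eps_gt0 : 0 < eps.

Local Notation M := (blockop M11 M12 M21 M22).
Local Notation A1 := (fun x => M11 x + eps *: x).
Local Notation D2 := (fun y => M22 y - eps *: y).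
Local Notation Meps := (blockop A1 M12 M21 D2).

Lemma A1_bounded_linear : bounded_linear A1.
Proof. exact: bounded_linearD hM11 (bounded_linear_scale _ eps). Qed.

Lemma D2_bounded_linear : bounded_linear D2.
Proof. exact: bounded_linearD hM22 (bounded_linearN (bounded_linear_scale _ eps)). Qed.

Lemma Meps_linear a (p q : H1 * H2) :
  Meps (a *: p.1 + q.1, a *: p.2 + q.2) =
  (a *: (Meps p).1 + (Meps q).1, a *: (Meps p).2 + (Meps q).2).
Proof. exact: (blockop_linear A1_bounded_linear hM12 hM21 D2_bounded_linear a p q). Qed.

Definition iform (p q : H1 * H2) : R := ip1 p.1 q.1 - ip2 p.2 q.2.

(* M is nonnegative for the indefinite form: the off-diagonal terms cancel
   since M21 = M12^*, and the diagonal blocks have the right signs. *)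
Lemma block_energy p : 0 <= iform (M p) p.
Proof.
rewrite /iform /blockop /= !(ipDl hip1) !(ipDl hip2) adj12 (ipC hip2 (M21 _)).
by have := pos11 p.1; have := neg22 p.2; lra.
Qed.

Lemma Meps_shift p : Meps p = ((M p).1 + eps *: p.1, (M p).2 - eps *: p.2).
Proof. by rewrite /blockop /= addrAC addrA. Qed.

Lemma Meps_energy p : eps * pnorm p ^+ 2 <= iform (Meps p) p.
Proof.
rewrite Meps_shift; move: (M p) (block_energy p) => m.
rewrite /iform /= (ipDl hip1) (ipBl hip2).
by rewrite (ipZl hip1) (ipZl hip2) (ipxx hip1) (ipxx hip2) pnorm_sqr; lra.
Qed.

(* Cauchy-Schwarz turns the energy estimate into eps |p| <= |M_eps p|. *)
Lemma Meps_lower_bound p : eps * pnorm p <= pnorm (Meps p).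
Proof.
have -> : pnorm (Meps p) = pnorm ((Meps p).1, - (Meps p).2) by rewrite /pnorm normrN.
apply: (pair_lower_bound hip1 hip2 eps_gt0).
by have := Meps_energy p; rewrite /iform /= (ipNl hip2).
Qed.

Lemma Meps_injective : injective Meps.
Proof.
move=> [x y] [x' y'] eq_img.
have := Meps_lower_bound (x - x', y - y').
rewrite (blockopB A1_bounded_linear hM12 hM21 D2_bounded_linear (x, y) (x', y')).
rewrite eq_img !subrr pnorm0 pmulr_rle0 //.
by move=> /pnorm_le0 [/subr0_eq -> /subr0_eq ->].
Qed.

(* Surjectivity by block elimination: A1 = M11 + eps is coercive, hence
   invertible, and so is minus the Schur complement
   S = eps - M22 + M21 A1^-1 M12, whose form <S y, y> >= eps |y|^2 because
   <M21 A1^-1 M12 y, y> = <A1 z, z> >= 0 for z = A1^-1 M12 y. *)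
Lemma Meps_surjective b : exists p, Meps p = b.
Proof.
have coerA1 x : eps * `|x| ^+ 2 <= ip1 (A1 x) x.
  by rewrite (ipDl hip1) (ipZl hip1) (ipxx hip1); have := pos11 x; lra.
have [K [bK A1K]] := coercive_inverse hip1 A1_bounded_linear eps_gt0 coerA1.
pose S y := - D2 y + M21 (K (M12 y)).
have bS : bounded_linear S.
  apply: bounded_linearD; first exact: bounded_linearN D2_bounded_linear.
  by apply: bounded_linear_comp => //; apply: bounded_linear_comp.
have coerS y : eps * `|y| ^+ 2 <= ip2 (S y) y.
  have cross : 0 <= ip2 (M21 (K (M12 y))) y.
    rewrite (ipC hip2) -adj12 -{1}(A1K (M12 y)).
    by apply: le_trans (coerA1 _); rewrite mulr_ge0 ?sqr_ge0 ?ltW.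
  rewrite (ipDl hip2) (ipNl hip2) (ipBl hip2) (ipZl hip2) (ipxx hip2).
  by have := neg22 y; lra.
have [G [_ SG]] := coercive_inverse hip2 bS eps_gt0 coerS.
case: b => b1 b2; pose y := G (M21 (K b1) - b2).
exists (K (b1 - M12 y), y); rewrite /blockop /= A1K subrK; congr (_, _).
have := SG (M21 (K b1) - b2); rewrite -/y /S (linB bK.1) (linB hM21.1).
set u := M21 (K b1); set v := M21 (K (M12 y)); set w := M22 y - eps *: y => Sy.
clearbody u v w.
have -> : u - v + w = u - (- w + v) by rewrite opprD opprK addrA addrAC.
by rewrite Sy subKr.
Qed.

(* The key estimate: if M_eps q = M p then |q| <= |p|.  Indeed
   M (p - q) = eps (q1, -q2), and nonnegativity of the indefinite form of M
   at p - q gives |q|^2 <= <q, p>. *)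
Lemma Meps_inverse_contractive p q : Meps q = M p -> pnorm q <= pnorm p.
Proof.
move=> Mq_eq; have := block_energy (p.1 - q.1, p.2 - q.2).
rewrite (blockopB hM11 hM12 hM21 hM22 p q) -Mq_eq Meps_shift; move: (M q) => m.
have -> : m.1 + eps *: q.1 - m.1 = eps *: q.1 by rewrite addrC addKr.
have -> : m.2 - eps *: q.2 - m.2 = - (eps *: q.2) by rewrite addrAC subrr add0r.
rewrite /iform /= (ipNl hip2) !(ipZl hip1) !(ipZl hip2) (ipBr hip1) (ipBr hip2).
rewrite (ipxx hip1) (ipxx hip2) => energy.
have : 1 * pnorm q ^+ 2 <= ip1 p.1 q.1 + ip2 p.2 q.2.
  rewrite mul1r pnorm_sqr (ipC hip1 p.1) (ipC hip2 p.2) -subr_ge0.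
  by rewrite -(pmulr_rge0 _ eps_gt0); lra.
by move=> /(pair_lower_bound hip1 hip2 ltr01); rewrite mul1r.
Qed.
End Regularisation.

(* M_eps is invertible with bounded inverse (its inverse is obtained by
   choice from surjectivity, and is linear and bounded because M_eps is
   linear, injective and bounded below), and |M_eps^-1 M| <= 1. *)
Theorem mainTheorem2 (R : realType)
  (H1 H2 : completeNormedModType R)
  (ip1 : H1 -> H1 -> R) (ip2 : H2 -> H2 -> R)
  (hip1 : is_inner_product ip1) (hip2 : is_inner_product ip2)
  (M11 : H1 -> H1) (M12 : H2 -> H1) (M21 : H1 -> H2) (M22 : H2 -> H2)
  (hM11 : bounded_linear M11) (hM12 : bounded_linear M12)
  (hM21 : bounded_linear M21) (hM22 : bounded_linear M22)
  (adj11 : forall x x' : H1, ip1 (M11 x) x' = ip1 x (M11 x'))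
  (adj22 : forall y y' : H2, ip2 (M22 y) y' = ip2 y (M22 y'))
  (adj12 : forall (y : H2) (x : H1), ip1 (M12 y) x = ip2 y (M21 x))
  (pos11 : forall x : H1, 0 <= ip1 (M11 x) x)
  (neg22 : forall y : H2, ip2 (M22 y) y <= 0) :
  forall eps : R, 0 < eps ->
    exists Ninv : H1 * H2 -> H1 * H2,
      [/\ bounded_linear_prod Ninv,
          (forall p, Ninv (blockop (fun x => M11 x + eps *: x) M12 M21
                                   (fun y => M22 y - eps *: y) p) = p),
          (forall p, blockop (fun x => M11 x + eps *: x) M12 M21
                             (fun y => M22 y - eps *: y) (Ninv p) = p)
        & (forall p, pnorm (Ninv (blockop M11 M12 M21 M22 p)) <= pnorm p)].
Proof.
move=> eps eps_gt0.
have surj := Meps_surjective hip1 hip2 hM11 hM12 hM21 hM22 adj12 pos11 neg22 eps_gt0.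
have inj := Meps_injective hip1 hip2 hM11 hM12 hM21 hM22 adj12 pos11 neg22 eps_gt0.
have lower := Meps_lower_bound hip1 hip2 adj12 pos11 neg22 eps_gt0.
have contr := Meps_inverse_contractive hip1 hip2 hM11 hM12 hM21 hM22 adj12 pos11 neg22 eps_gt0.
pose Ninv b := projT1 (cid (surj b)).
have NinvK b : blockop (fun x => M11 x + eps *: x) M12 M21 (fun y => M22 y - eps *: y)
    (Ninv b) = b by rewrite /Ninv; case: cid.
exists Ninv; split => [|p|//|p]; last exact: contr.
- split; first by move=> a p q; apply: inj; rewrite (Meps_linear hM11 hM12 hM21 hM22) !NinvK.
  exists eps^-1 => p; rewrite -(ler_pM2l eps_gt0) mulrA mulfV ?gt_eqF // mul1r.
  by have := lower (Ninv p); rewrite NinvK.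
- by apply: inj; rewrite NinvK.
Qed.
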